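(* Let $r, J, L \ge 1$ be integers. Let $\mathbf{H}(X) = [h_{j,l}(X)]_{j \in [J], l \in [L]}$ be a $J \times L$ matrix whose entries are elements of $\mathbb{F}_2[X]/\langle X^r - 1\rangle$, each of which is either $0$, a monomial $X^{a}$, or a binomial $X^{a} + X^{b}$ with $a \not\equiv b \pmod r$. Let $H$ be the associated $Jr \times Lr$ binary parity-check matrix, and assume that $H$ has constant column weight and constant row weight. For each $j,l$ let $E_{j,l} \subseteq \mathbb{Z}_r$ be the set of exponents occurring in $h_{j,l}(X)$ (empty, one element, or two elements respectively). For $i, j \in [J]$ let $\mathbf{d}_{ij}$ be the multiset $\{(e - e') \bmod r : l \in [L],\ e \in E_{i,l},\ e' \in E_{j,l}\}$ (pairs with $e=e'$ when $i=j$ included). Then the code $C(H)$ is dual-containing if and only if $\mathbf{d}_{ij}$ is multiplicity even for all $i, j \in [J]$.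
   Context: The binary matrix $H$ associated with $\mathbf{H}(X)$ is obtained by replacing each entry $h_{j,l}(X) = \sum_{s=0}^{r-1} c_s X^s$ by the $r \times r$ binary circulant matrix whose first row is $(c_0, \ldots, c_{r-1})$ (each subsequent row being the cyclic right shift by one of the previous row). $C(H)$ denotes the binary linear code that is the null space of $H$. The code $C(H)$ is called dual-containing if $C(H)^\perp \subseteq C(H)$, equivalently $H H^T = 0$ over $\mathbb{F}_2$. A multiset is multiplicity even if every element occurs an even number of times (the empty multiset is multiplicity even). $[J] = \{1, \ldots, J\}$. *)

From HB Require Import structures.
From mathcomp Require Import all_boot all_order all_algebra.
Set Implicit Arguments. Unset Strict Implicit. Unset Printing Implicit Defensive.
Import GRing.Theory.
Local Open Scope ring_scope.

Definition ord_sub (r : nat) (t s : 'I_r) : 'I_r :=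
  Ordinal (ltn_pmod (t + r - s) (leq_ltn_trans (leq0n s) (ltn_ord s))).

(* r x r binary circulant matrix with first row (c_0,...,c_{r-1});
   row s is the cyclic right shift by s of row 0: entry (s,t) = c_{(t-s) mod r}. *)
Definition circulant (r : nat) (c : 'I_r -> 'F_2) : 'M['F_2]_r :=
  \matrix_(s < r, t < r) c (ord_sub t s).

(* The binary matrix H associated with H(X): entry h_{j,l}(X) = sum_s c j l s X^s
   is replaced by circulant (c j l).  Its size is (sum_{j<J} r) x (sum_{l<L} r) = Jr x Lr. *)
Definition assoc_matrix (r J L : nat) (c : 'I_J -> 'I_L -> 'I_r -> 'F_2) :
  'M['F_2]_(\sum_(j < J) r, \sum_(l < L) r) :=
  \mxblock_(j < J, l < L) circulant (c j l).

Definition exps (r : nat) (c : 'I_r -> 'F_2) : {set 'I_r} := [set s | c s != 0].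

Definition code (m n : nat) (H : 'M['F_2]_(m, n)) : {set 'rV['F_2]_n} :=
  [set v | H *m v^T == 0].
Definition dual_code (n : nat) (C : {set 'rV['F_2]_n}) : {set 'rV['F_2]_n} :=
  [set u | [forall v in C, u *m v^T == 0]].
Definition dual_containing (m n : nat) (H : 'M['F_2]_(m, n)) : Prop :=
  dual_code (code H) \subset code H.

Definition const_col_weight (m n : nat) (H : 'M['F_2]_(m, n)) : Prop :=
  exists w, forall q : 'I_n, #|[set p : 'I_m | H p q != 0]| = w.
Definition const_row_weight (m n : nat) (H : 'M['F_2]_(m, n)) : Prop :=
  exists w, forall p : 'I_m, #|[set q : 'I_n | H p q != 0]| = w.

Definition dmultiset (r J L : nat) (c : 'I_J -> 'I_L -> 'I_r -> 'F_2) (i j : 'I_J)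
  : seq 'I_r :=
  flatten [seq [seq ord_sub e e' | e <- enum (exps (c i l)), e' <- enum (exps (c j l))]
          | l <- enum 'I_L].

Definition mult_even (T : eqType) (s : seq T) : Prop :=
  forall x : T, ~~ odd (count_mem x s).

From mathcomp Require Import all_boot all_order all_algebra.
Import GRing.Theory.
Set Implicit Arguments. Unset Strict Implicit. Unset Printing Implicit Defensive.

(* H H^T is the block matrix whose (i, j) block is sum_l C(h_il) C(h_jl)^T.
   Its entry at (s, t) is the number of triples (l, e, e') with e in E_il,
   e' in E_jl and e - e' = t - s (mod r), i.e. the multiplicity of t - s in
   d_ij, read mod 2.  Hence H H^T = 0 iff every d_ij is multiplicity even.
   Over a field the dual of the null space of H is the row space of H, so
   C(H) is dual-containing iff H H^T = 0. *)

Section OrdinalArithmetic.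

Variable r : nat.
Implicit Types e s t x : 'I_r.

Definition ord_add e s : 'I_r :=
  Ordinal (ltn_pmod (e + s) (leq_ltn_trans (leq0n s) (ltn_ord s))).

Lemma ord_subP x t s : (x == ord_sub t s) = (x + s == t %[mod r])%N.
Proof.
have s_le : (s <= t + r)%N by apply: leq_trans (ltnW (ltn_ord s)) (leq_addl _ _).
apply/eqP/idP => [->|x_s_t].
  by rewrite /= modnDml subnK // modnDr.
apply/val_inj; rewrite /= -(modn_small (ltn_ord x)).
by apply/eqP; rewrite -(eqn_modDr s) subnK // modnDr.
Qed.

Lemma ord_subE x t s : (x + s = t %[mod r])%N -> ord_sub t s = x.
Proof. by move=> x_s_t; apply/esym/eqP; rewrite ord_subP; apply/eqP. Qed.

Lemma ord_subK t s : (ord_sub t s + s = t %[mod r])%N.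
Proof. by apply/eqP; rewrite -ord_subP. Qed.

Lemma ord_addK s e : ord_sub (ord_add e s) s = e.
Proof. by apply: ord_subE; rewrite /= modn_mod. Qed.

Lemma ord_sub_add e s t : ord_sub (ord_add e s) t = ord_sub e (ord_sub t s).
Proof.
apply: ord_subE; rewrite /= modn_mod -modnDmr -(ord_subK t s) modnDmr addnA.
by rewrite -modnDml ord_subK modnDml.
Qed.

Lemma eq_ord_sub_sym e e' x : (ord_sub e e' == x) = (e' == ord_sub e x).
Proof. by rewrite eq_sym ord_subP addnC -ord_subP. Qed.

End OrdinalArithmetic.

Local Open Scope ring_scope.

Lemma F2_natr_neq0 (a : 'F_2) : a = (a != 0)%:R.
Proof. by case: a => [[|[|n]] lt_n2] //; apply/val_inj. Qed.

Lemma F2_natr_eq0 (n : nat) : ((n%:R : 'F_2) == 0) = ~~ odd n.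
Proof. by rewrite -Fp_nat_mod // modn2; case: (odd n). Qed.

Lemma count_mem_ord_sub_pairs (r : nat) (E1 E2 : {set 'I_r}) (x : 'I_r) :
  count_mem x [seq ord_sub e e' | e <- enum E1, e' <- enum E2] =
  (\sum_(e in E1) (ord_sub e x \in E2))%N.
Proof.
rewrite -sum1_count big_mkcond /= big_allpairs_dep big_enum /=.
apply: eq_bigr => e _; rewrite big_enum /=.
under eq_bigr => e' _ do rewrite eq_ord_sub_sym.
rewrite -big_mkcondr /=; case: (boolP (ord_sub e x \in E2)) => [E2_ex|E2'_ex].
  by rewrite (big_pred1 (ord_sub e x)) // => e' /=; case: eqP => [->|]; rewrite ?E2_ex ?andbF.
by rewrite big_pred0 // => e'; case: eqP => [->|]; rewrite ?(negPf E2'_ex) ?andbF.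
Qed.

Lemma count_mem_dmultiset (r J L : nat) (c : 'I_J -> 'I_L -> 'I_r -> 'F_2)
    (i j : 'I_J) (x : 'I_r) :
  count_mem x (dmultiset c i j) =
  (\sum_l \sum_(e in exps (c i l)) (ord_sub e x \in exps (c j l)))%N.
Proof.
rewrite /dmultiset -sum1_count big_flatten /= big_map big_enum /=.
by apply: eq_bigr => l _; rewrite sum1_count count_mem_ord_sub_pairs.
Qed.

Lemma circulant_mul_tr (r : nat) (c1 c2 : 'I_r -> 'F_2) (s t : 'I_r) :
  (circulant c1 *m (circulant c2)^T) s t =
  (\sum_(e in exps c1) (ord_sub e (ord_sub t s) \in exps c2))%:R.
Proof.
rewrite !mxE (eq_bigr (fun u => c1 (ord_sub u s) * c2 (ord_sub u t))); last first.
  by move=> u _; rewrite !mxE.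
rewrite (reindex_inj (h := fun e => ord_add e s)); last first.
  by move=> a b /(congr1 (fun z => ord_sub z s)); rewrite !ord_addK.
rewrite natr_sum [RHS]big_mkcond; apply: eq_bigr => e _.
rewrite ord_addK ord_sub_add !inE [c1 e]F2_natr_neq0 [c2 _]F2_natr_neq0.
by case: (c1 e != 0); case: (c2 _ != 0); rewrite ?mulr0 ?mul0r ?mulr1.
Qed.

Lemma assoc_matrix_mul_tr (r J L : nat) (c : 'I_J -> 'I_L -> 'I_r -> 'F_2) :
  assoc_matrix c *m (assoc_matrix c)^T =
  \mxblock_(i, j) \sum_l (circulant (c i l) *m (circulant (c j l))^T).
Proof. by rewrite /assoc_matrix tr_mxblock mul_mxblock. Qed.

Lemma assoc_matrix_block_entry (r J L : nat) (c : 'I_J -> 'I_L -> 'I_r -> 'F_2)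
    (i j : 'I_J) (s t : 'I_r) :
  (\sum_l (circulant (c i l) *m (circulant (c j l))^T)) s t =
  (count_mem (ord_sub t s) (dmultiset c i j))%:R.
Proof.
by rewrite summxE count_mem_dmultiset natr_sum; apply: eq_bigr => l _;
  apply: circulant_mul_tr.
Qed.

Section DualContaining.

Variables m n : nat.
Implicit Type H : 'M['F_2]_(m, n).

Lemma mem_code H v : (v \in code H) = (v *m H^T == 0).
Proof. by rewrite inE -trmx_eq0 trmx_mul trmxK. Qed.

Lemma code_row_kermx_tr H p : row p (kermx H^T) \in code H.
Proof. by rewrite mem_code -row_mul mulmx_ker row0. Qed.

Lemma dual_code_sub_rowspace H u : u \in dual_code (code H) -> (u <= H)%MS.
Proof.
rewrite inE => /forall_inP u_dual; set K := kermx H^T.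
have uK : u *m K^T = 0.
  apply/matrixP => i p; rewrite ord1 !mxE.
  have /eqP/matrixP/(_ 0 0) := u_dual _ (code_row_kermx_tr H p).
  by rewrite !mxE => uKp; rewrite -[RHS]uKp; apply: eq_bigr => k _; rewrite !mxE.
have H_ker : (H <= kermx K^T)%MS.
  by apply/sub_kermxP; rewrite -(trmxK H) -trmx_mul mulmx_ker trmx0.
have rank_ker : \rank (kermx K^T) = \rank H.
  by rewrite mxrank_ker mxrank_tr mxrank_ker mxrank_tr subKn // rank_leq_col.
have ker_H : (kermx K^T <= H)%MS by rewrite -(mxrank_leqif_sup H_ker).2 rank_ker.
exact: submx_trans (introT sub_kermxP uK) ker_H.
Qed.

Lemma dual_containingE H : dual_containing H <-> H *m H^T = 0.
Proof.
split => [dual_sub | HHt0].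
  apply/row_matrixP => p; rewrite row_mul row0; apply/eqP.
  rewrite -mem_code; apply: (subsetP dual_sub); rewrite inE.
  by apply/forall_inP => v; rewrite inE -row_mul => /eqP ->; rewrite row0.
apply/subsetP => u /dual_code_sub_rowspace /submxP [D ->].
by rewrite mem_code -mulmxA HHt0 mulmx0.
Qed.

End DualContaining.

Theorem theorem10 (r J L : nat) (c : 'I_J -> 'I_L -> 'I_r -> 'F_2) :
  (0 < r)%N -> (0 < J)%N -> (0 < L)%N ->
  (* each entry is 0, a monomial X^a, or a binomial X^a + X^b with a <> b mod r *)
  (forall (j : 'I_J) (l : 'I_L), #|exps (c j l)| <= 2)%N ->
  const_col_weight (assoc_matrix c) ->
  const_row_weight (assoc_matrix c) ->
  (dual_containing (assoc_matrix c) <->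
   forall i j : 'I_J, mult_even (dmultiset c i j)).
Proof.
move=> r_gt0 _ _ _ _ _.
apply: iff_trans (dual_containingE _) _; rewrite assoc_matrix_mul_tr; split.
  move=> HHt0 i j x; pose s0 := Ordinal r_gt0.
  have sub_s0 : ord_sub x s0 = x by apply: ord_subE; rewrite addn0.
  have /matrixP/(_ s0 x) := congr1 (fun M => submxblock M i j) HHt0.
  rewrite mxblockK submxblock0 assoc_matrix_block_entry sub_s0 mxE => /eqP.
  by rewrite F2_natr_eq0.
move=> d_even; rewrite -(mxblock0 (p_ := fun _ : 'I_J => r) (q_ := fun _ : 'I_J => r)).
apply: eq_mxblock => i j; apply/matrixP => s t.
by rewrite assoc_matrix_block_entry mxE; apply/eqP; rewrite F2_natr_eq0 d_even.
Qed.
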